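(* Let $0<T<\infty$, $a,b\in\mathbb{R}$, $(B_t)_{t\in[0,T]}$ the continuous version of $B_t=\langle\cdot,\mathbf{1}_{[0,t)}\rangle$ on the white noise space, $X_t:=a(1-\frac tT)+b\frac tT+B_t-\frac tT B_T$, and for $\varepsilon>0$ let $\mathcal{I}^{BB}_\varepsilon:=\int_0^T\int_0^t p_\varepsilon(X_t-X_s)\,ds\,dt$ with $p_\varepsilon(x)=(2\pi\varepsilon)^{-1/2}e^{-x^2/(2\varepsilon)}$; let $\mathcal{I}^{BB}\in L^2(\mu)$ be the $L^2(\mu)$-limit of $\mathcal{I}^{BB}_\varepsilon$ as $\varepsilon\downarrow0$ (which exists). Then for every $z\in\mathbb{C}$ with $\operatorname{Re}z\le 0$ and every $1\le p<\infty$, $\exp(z\mathcal{I}^{BB}_\varepsilon)$ converges to $\exp(z\mathcal{I}^{BB})$ in $L^p(\mu)$ as $\varepsilon\to0$.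
   Context: $\mu$ is the white noise measure on the space $\mathcal{S}'(\mathbb{R})$ of tempered distributions: $\int\exp(i\langle\omega,\xi\rangle)d\mu(\omega)=\exp(-\frac12\langle\xi,\xi\rangle)$ for Schwartz $\xi$, with $\langle\cdot,\cdot\rangle$ the dual pairing extending the $L^2(\mathbb{R})$ inner product; for $\xi\in L^2(\mathbb{R})$, $\langle\cdot,\xi\rangle$ is an $L^2(\mu)$-limit. $(B_t)$ is then a standard Brownian motion and $(X_t)$ a Brownian bridge from $a$ to $b$ on $[0,T]$. $L^p(\mu)$ denotes complex-valued $p$-integrable functions w.r.t. $\mu$. *)

From HB Require Import structures.
From mathcomp Require Import all_boot all_order all_algebra.
From mathcomp Require Import all_classical all_reals all_analysis.
Set Implicit Arguments. Unset Strict Implicit. Unset Printing Implicit Defensive.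
Import Order.TTheory GRing.Theory Num.Theory.
Import numFieldNormedType.Exports.
Local Open Scope classical_set_scope.
Local Open Scope ring_scope.

Definition heat_kernel {R : realType} (eps x : R) : R :=
  (Num.sqrt (2 * pi * eps))^-1 * expR (- (x ^+ 2) / (2 * eps)).

(** A standard Brownian motion on [0,Tm] with continuous paths, on a
    probability space (Om, P), characterised exactly as the coordinate
    process <., 1_[0,t)> of the white noise measure: for all finite families
    of times t_k in [0,Tm] and reals c_k,
      E[exp(i sum_k c_k B_{t_k})] = exp(-1/2 <xi,xi>),
    with xi = sum_k c_k 1_[0,t_k), so <xi,xi> = sum_{j,k} c_j c_k min(t_j,t_k).
    The complex characteristic function is written via its real and
    imaginary parts (cos / sin). *)
Definition brownian_motion {R : realType} {d : measure_display}
  {Om : measurableType d} (P : probability Om R) (Tm : R)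
  (B : R -> Om -> R) : Prop :=
  [/\ (forall t, t \in `[0, Tm] -> measurable_fun setT (B t)),
      (forall w, {within `[0, Tm], continuous (fun t => B t w)}),
      (forall (n : nat) (t c : 'I_n -> R), (forall k, t k \in `[0, Tm]) ->
        (\int[P]_w (cos (\sum_(k < n) c k * B (t k) w))%:E =
         (expR (- (\sum_(j < n) \sum_(k < n) c j * c k * Order.min (t j) (t k)) / 2))%:E)%E)
    & (forall (n : nat) (t c : 'I_n -> R), (forall k, t k \in `[0, Tm]) ->
        (\int[P]_w (sin (\sum_(k < n) c k * B (t k) w))%:E = 0)%E)].

Definition bridge {R : realType} {Om : Type} (Tm a b : R) (B : R -> Om -> R)
  (t : R) (w : Om) : R :=
  a * (1 - t / Tm) + b * (t / Tm) + B t w - (t / Tm) * B Tm w.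

Definition approx_slt {R : realType} {Om : Type} (Tm a b : R)
  (B : R -> Om -> R) (eps : R) (w : Om) : R :=
  Rintegral lebesgue_measure `[0, Tm]
    (fun t => Rintegral lebesgue_measure `[0, t]
       (fun s => heat_kernel eps (bridge Tm a b B t w - bridge Tm a b B s w))).

(** Complex exponential exp(z x) for z = u + i v and x real, through its real
    and imaginary parts, and the complex modulus |exp(z x) - exp(z y)|. *)
Definition cexp_re {R : realType} (u v x : R) : R := expR (u * x) * cos (v * x).
Definition cexp_im {R : realType} (u v x : R) : R := expR (u * x) * sin (v * x).
Definition cexp_dist {R : realType} (u v x y : R) : R :=
  Num.sqrt ((cexp_re u v x - cexp_re u v y) ^+ 2
            + (cexp_im u v x - cexp_im u v y) ^+ 2).

From HB Require Import structures.
From mathcomp Require Import all_boot all_order all_algebra.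
From mathcomp Require Import all_classical all_reals all_analysis.
From mathcomp Require Import ring lra.
Import measurable_realfun.
Import Order.TTheory GRing.Theory Num.Theory.
Import numFieldNormedType.Exports.
Local Open Scope classical_set_scope.
Local Open Scope ring_scope.

(* Since every I_eps is nonnegative, so is its L^2 limit I, almost surely. For
   Re z <= 0 the map x |-> exp(z x) is bounded by 1 and |z|-Lipschitz on
   [0, oo), whence |exp(z x) - exp(z y)|^p <= e + 2^p |z|^2 / e^2 (x - y)^2 for
   every e in (0, 1]. Integrating, E|exp(z I_eps) - exp(z I)|^p is at most
   e + C_e E(I_eps - I)^2, which tends to e. The Brownian bridge only enters
   through the existence of the L^2 limit, which is a hypothesis. *)

Section elementary_bounds.
Context {R : realType}.
Implicit Types a b s t x y : R.

Lemma norm_sin_le t : `|sin t| <= `|t|.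
Proof.
have sin_le_ge0 s : 0 <= s -> `|sin s| <= s.
  move=> s0; have [c _] := @MVT_segment R sin cos 0 s s0
    (fun x _ => is_derive_sin x) (continuous_subspaceT (@continuous_sin R)).
  rewrite sin0 !subr0 => ->.
  by rewrite normrM (ger0_norm s0) ler_piMl// cos_max.
have [t0|t0] := leP 0 t; first by rewrite (ger0_norm t0) sin_le_ge0.
by rewrite -normrN -sinN (ltr0_norm t0) sin_le_ge0// oppr_ge0 ltW.
Qed.

Lemma one_sub_cos_le t : 1 - cos t <= t ^+ 2 / 2.
Proof.
have -> : cos t = cos ((t / 2) *+ 2) by rewrite -mulr_natr divfK.
rewrite cos_mulr2n cos2sin2.
have : sin (t / 2) ^+ 2 <= (t / 2) ^+ 2.
  by rewrite -real_normK ?num_real// -[leRHS]real_normK ?num_real//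
    lerXn2r ?nnegrE// norm_sin_le.
have -> : t ^+ 2 / 2 = (t / 2) ^+ 2 * 2 by field.
lra.
Qed.

Lemma dist_expR_le a b : a <= 0 -> b <= 0 -> `|expR a - expR b| <= `|a - b|.
Proof.
wlog ab : a b / a <= b.
  move=> wlog_ab a0 b0; have [ab|/ltW ba] := leP a b; first exact: wlog_ab.
  by rewrite distrC (distrC a); exact: wlog_ab.
move=> a0 b0.
have expR_ba : expR a = expR b * expR (a - b) by rewrite -expRD addrC subrK.
have eb1 : expR b <= 1 by rewrite expR_le1.
have eab1 : expR (a - b) <= 1 by rewrite expR_le1 subr_le0.
have := expR_ge1Dx (a - b); have := expR_ge0 b.
rewrite expR_ba ler0_norm; last by rewrite subr_le0 ler_piMr.
rewrite ler0_norm ?subr_le0//; nra.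
Qed.

Lemma powR_le_sqr p e x : 1 <= p -> 0 < e -> e <= 1 -> 0 <= x <= 2 ->
  x `^ p <= e + 2 `^ p / e ^+ 2 * x ^+ 2.
Proof.
move=> p1 e0 e1 /andP[x0 x2].
have C0 : 0 <= 2 `^ p / e ^+ 2 * x ^+ 2 by rewrite !mulr_ge0 ?powR_ge0 ?invr_ge0 ?sqr_ge0.
have [xe|ex] := leP x e.
  suff : x `^ p <= x by lra.
  have [->|xn0] := eqVneq x 0; first by rewrite powR0//; lra.
  by apply: ge1r_powR => //; rewrite lt_neqAle eq_sym xn0 x0/=; lra.
have : x `^ p <= 2 `^ p by apply: ge0_ler_powR; rewrite ?nnegrE//; lra.
have : 1 <= x ^+ 2 / e ^+ 2.
  by rewrite ler_pdivlMr ?exprn_gt0// mul1r lerXn2r ?nnegrE// ltW.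
have := powR_ge0 2 p.
rewrite mulrAC; nra.
Qed.

End elementary_bounds.

Section cexp_dist.
Context {R : realType}.
Variables u v : R.
Hypothesis u_le0 : u <= 0.

Lemma cexp_dist_sqr x y : cexp_dist u v x y ^+ 2 =
  (expR (u * x) - expR (u * y)) ^+ 2
  + 2 * expR (u * x) * expR (u * y) * (1 - cos (v * x - v * y)).
Proof.
rewrite /cexp_dist sqr_sqrtr ?addr_ge0 ?sqr_ge0// /cexp_re /cexp_im cosB.
have := cos2Dsin2 (v * x); have := cos2Dsin2 (v * y).
move: (cos (v * x)) (sin (v * x)) (cos (v * y)) (sin (v * y)) => c1 s1 c2 s2.
move: (expR (u * x)) (expR (u * y)) => A B h2 h1.
apply/eqP; rewrite -subr_eq0; apply/eqP.
transitivity (A ^+ 2 * (c1 ^+ 2 + s1 ^+ 2 - 1) + B ^+ 2 * (c2 ^+ 2 + s2 ^+ 2 - 1)).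
  by ring.
by rewrite h1 h2 !subrr !mulr0 addr0.
Qed.

Lemma cexp_dist_le_expRD x y :
  cexp_dist u v x y <= expR (u * x) + expR (u * y).
Proof.
have := expR_ge0 (u * x); have := expR_ge0 (u * y).
move: (cos_geN1 (v * x - v * y)) (cexp_dist_sqr x y).
move: (expR (u * x)) (expR (u * y)) (cos _) => A B c c1 dist2 B0 A0.
have ABc : 0 <= A * B * (1 + c) by rewrite !mulr_ge0// -lerBlDl sub0r.
rewrite -(@ler_pXn2r _ 2)// ?nnegrE ?sqrtr_ge0 ?addr_ge0// dist2; nra.
Qed.

Lemma cexp_dist_le2 x y : 0 <= x -> 0 <= y -> cexp_dist u v x y <= 2.
Proof.
move=> x0 y0; have := cexp_dist_le_expRD x y.
have : expR (u * x) <= 1 by rewrite expR_le1 mulr_le0_ge0.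
have : expR (u * y) <= 1 by rewrite expR_le1 mulr_le0_ge0.
lra.
Qed.

Lemma cexp_dist_sqr_le x y : 0 <= x -> 0 <= y ->
  cexp_dist u v x y ^+ 2 <= (u ^+ 2 + v ^+ 2) * (x - y) ^+ 2.
Proof.
move=> x0 y0; rewrite cexp_dist_sqr.
have ux : u * x <= 0 by rewrite mulr_le0_ge0.
have uy : u * y <= 0 by rewrite mulr_le0_ge0.
have dexp : (expR (u * x) - expR (u * y)) ^+ 2 <= (u * x - u * y) ^+ 2.
  by rewrite -real_normK ?num_real// -[leRHS]real_normK ?num_real//
    lerXn2r ?nnegrE// dist_expR_le.
have := one_sub_cos_le (v * x - v * y).
have := cos_le1 (v * x - v * y).
have : expR (u * x) * expR (u * y) <= 1 by rewrite mulr_ile1 ?expR_ge0 ?expR_le1.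
have := mulr_ge0 (expR_ge0 (u * x)) (expR_ge0 (u * y)).
have -> : (u ^+ 2 + v ^+ 2) * (x - y) ^+ 2 =
  (u * x - u * y) ^+ 2 + (v * x - v * y) ^+ 2 by ring.
rewrite -!mulrA (mulrA (expR (u * x))); nra.
Qed.

Lemma cexp_dist_powR_le (p e x y : R) : 1 <= p -> 0 < e -> e <= 1 ->
  0 <= x -> 0 <= y ->
  cexp_dist u v x y `^ p <= e + 2 `^ p * (u ^+ 2 + v ^+ 2) / e ^+ 2 * (x - y) ^+ 2.
Proof.
move=> p1 e0 e1 x0 y0.
apply: le_trans (@powR_le_sqr R p e (cexp_dist u v x y) p1 e0 e1 _) _.
  by rewrite sqrtr_ge0 cexp_dist_le2.
have -> : 2 `^ p * (u ^+ 2 + v ^+ 2) / e ^+ 2 * (x - y) ^+ 2 =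
  2 `^ p / e ^+ 2 * ((u ^+ 2 + v ^+ 2) * (x - y) ^+ 2) by ring.
by rewrite lerD2l ler_wpM2l ?mulr_ge0 ?powR_ge0 ?invr_ge0 ?sqr_ge0 ?cexp_dist_sqr_le.
Qed.

End cexp_dist.

(* The integral of a nonnegative function is the supremum of the integrals of
   the simple functions below it, whether or not it is measurable; these
   inequalities are needed because [approx_slt] is not known to be measurable. *)
Section ge0_integral_nonmeasurable.
Local Open Scope ereal_scope.
Context {d} {T : measurableType d} {R : realType}.
Variable mu : {measure set T -> \bar R}.
Import HBNNSimple.

Lemma ge0_le_integralT (f g : T -> \bar R) : (forall x, 0 <= f x) ->
  (forall x, f x <= g x) -> \int[mu]_x f x <= \int[mu]_x g x.
Proof.
move=> f0 fg; have g0 x : 0 <= g x := le_trans (f0 x) (fg x).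
rewrite !ge0_integralTE//.
apply: ge_ereal_sup => _ [h /= hf <-]; apply: ereal_sup_ubound => /=.
by exists h => // x; exact: le_trans (hf x) (fg x).
Qed.

Lemma ge0_integralZl_leT (c : R) (f : T -> \bar R) : (0 <= c)%R ->
  (forall x, 0 <= f x) -> \int[mu]_x (c%:E * f x) <= c%:E * \int[mu]_x f x.
Proof.
move=> c0 f0; have [->|cn0] := eqVneq c 0%R.
  by rewrite mul0e; under eq_integral do rewrite mul0e; rewrite integral0.
rewrite ge0_integralTE; last by move=> x; rewrite mule_ge0.
apply: ge_ereal_sup => _ [h /= hf <-].
have mhc : measurable_fun setT (fun x => h x / c)%R.
  by apply: measurable_funM => //; exact: measurable_cst.
have -> : sintegral mu h = \int[mu]_x (h x)%:E.
  by rewrite integral_nnsfun// patch_setT.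
rewrite (eq_integral (fun x => c%:E * (h x / c)%:E)); last first.
  by move=> x _; rewrite -EFinM mulrC divfK.
rewrite ge0_integralZl_EFin//; last 2 first.
  - by move=> x _; rewrite lee_fin divr_ge0.
  - exact/measurable_EFinP.
rewrite lee_wpmul2l ?lee_fin//; apply: ge0_le_integralT => x.
  by rewrite lee_fin divr_ge0.
have := lee_wpmul2l (_ : 0 <= c^-1%:E) (hf x).
by rewrite muleA -!EFinM mulVf// mul1e mulrC; apply; rewrite lee_fin invr_ge0.
Qed.

Lemma ge0_integralD_leT (f : T -> \bar R) (g : T -> R) : (forall x, 0 <= f x) ->
  (forall x, 0 <= g x)%R -> measurable_fun setT g ->
  \int[mu]_x (f x + (g x)%:E) <= \int[mu]_x f x + \int[mu]_x (g x)%:E.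
Proof.
move=> f0 g0 mg.
rewrite ge0_integralTE; last by move=> x; rewrite adde_ge0// lee_fin.
apply: ge_ereal_sup => _ [h /= hf <-].
have -> : sintegral mu h = \int[mu]_x (h x)%:E.
  by rewrite integral_nnsfun// patch_setT.
have mhg : measurable_fun setT (fun x => h x - g x)%R by exact: measurable_funB.
(* split [h] into the part above [g], bounded by [f], and the part below [g] *)
rewrite (eq_integral (fun x => (((fun x => h x - g x)%R)^\+ x)%:E
    + (((fun x => h x) \min g) x)%:E)); last first.
  move=> x _; rewrite -EFinD /funrpos /=; congr EFin.
  by case: (leP (h x - g x)%R 0%R); case: (leP (h x) (g x)); lra.
rewrite ge0_integralD//; last 4 first.
  - by move=> x _; rewrite lee_fin funrpos_ge0.
  - by apply/measurable_EFinP; exact: measurable_funrpos.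
  - by move=> x _; rewrite lee_fin /= le_min fun_ge0 g0.
  - by apply/measurable_EFinP; exact: measurable_minr.
apply: leeD.
  apply: ge0_le_integralT => x; first by rewrite lee_fin funrpos_ge0.
  move: (hf x) (f0 x); case: (f x) => [r| |] //= hr r0; last by rewrite leey.
  rewrite -EFinD !lee_fin in hr r0 *.
  by rewrite /funrpos /= ge_max r0 andbT; lra.
apply: ge0_le_integral => //.
- by move=> x _; rewrite lee_fin /= le_min fun_ge0 g0.
- by apply/measurable_EFinP; exact: measurable_minr.
- exact/measurable_EFinP.
- by move=> x _; rewrite lee_fin /= ge_min lexx orbT.
Qed.

End ge0_integral_nonmeasurable.

Lemma measurable_ltr0 {d} {T : measurableType d} {R : realType} (g : T -> R) :
  measurable_fun setT g -> measurable [set x | g x < 0].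
Proof.
move=> mg; have := mg measurableT _ (@measurable_itv _ `]-oo, 0[); rewrite setTI.
by congr measurable; apply/seteqP; split => x; rewrite /= in_itv.
Qed.

Section L2_limit.
Local Open Scope ereal_scope.
Context {d} {T : measurableType d} {R : realType}.
Variable mu : {measure set T -> \bar R}.

(* On [g < 0] the approximants sit at distance at least [|g|] from [g]. *)
Lemma L2_limit_of_ge0_ge0 {I} {F : set_system I} {FF : ProperFilter F}
    (f : I -> T -> R) (g : T -> R) :
  measurable_fun setT g -> (forall i x, (0 <= f i x)%R) ->
  \int[mu]_x ((f i x - g x) ^+ 2)%:E @[i --> F] --> 0%E ->
  mu [set x | g x < 0]%R = 0.
Proof.
move=> mg f0 f_g.
set N := [set x | g x < 0]%R.
have mN : measurable N := measurable_ltr0 _ mg.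
pose G x := (\1_N x * g x ^+ 2)%:E.
have G0 x : 0 <= G x by rewrite lee_fin mulr_ge0 ?sqr_ge0.
have mG : measurable_fun setT G.
  apply/measurable_EFinP; apply: measurable_funM; first exact: measurable_indic.
  by under eq_fun do rewrite expr2; exact: measurable_funM.
have intG_le0 : \int[mu]_x G x <= 0.
  apply: cvge_ge f_g; apply: nearW => i; apply: ge0_le_integralT => // x.
  rewrite /G lee_fin indicE; have [/set_mem Nx|_] := boolP (x \in N).
    by move: (f0 i x) Nx; rewrite /N /= mul1r; nra.
  by rewrite mul0r sqr_ge0.
have : \int[mu]_(x in setT) `|G x| = 0.
  rewrite (eq_integral G); last by move=> x _; rewrite gee0_abs.
  by apply/le_anti; rewrite intG_le0 integral_ge0.
move=> /(ae_eq_integral_abs _ measurableT mG) [M [mM M0 GM]].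
apply: subset_measure0 M0 => // x Nx; apply: GM => /(_ Logic.I) /=.
rewrite /G indicE mem_set// mul1r => -[] /eqP; rewrite sqrf_eq0 => /eqP gx0.
by move: Nx; rewrite /N /= gx0 ltxx.
Qed.

End L2_limit.

Section integral_cexp_dist.
Local Open Scope ereal_scope.
Context {d} {T : measurableType d} {R : realType}.
Variable P : probability T R.
Variables (u v p : R) (f g : T -> R).
Hypotheses (u_le0 : (u <= 0)%R) (p_ge1 : (1 <= p)%R).
Hypotheses (f_ge0 : forall x, (0 <= f x)%R) (mg : measurable_fun setT g).
Hypothesis g_ge0_ae : P [set x | g x < 0]%R = 0.

Lemma integral_cexp_dist_powR_le (e : R) : (0 < e)%R -> (e <= 1)%R ->
  \int[P]_x (cexp_dist u v (f x) (g x) `^ p)%:E <=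
  (2 `^ p * (u ^+ 2 + v ^+ 2) / e ^+ 2)%:E * \int[P]_x ((f x - g x) ^+ 2)%:E
  + e%:E.
Proof.
move=> e0 e1; set C := (2 `^ p * _ / _)%R.
have C0 : (0 <= C)%R by rewrite !mulr_ge0 ?powR_ge0 ?invr_ge0 ?addr_ge0 ?sqr_ge0.
set N := [set x | g x < 0]%R.
have mN : measurable N := measurable_ltr0 _ mg.
(* on the null set [N] the Lipschitz bound is unavailable; use the crude one *)
pose G x := (\1_N x * (1 + expR (u * g x)) `^ p)%R.
have G0 x : (0 <= G x)%R by rewrite mulr_ge0 ?powR_ge0.
have mG : measurable_fun setT G.
  apply: measurable_funM; first exact: measurable_indic.
  apply: measurableT_comp (measurable_powR p) _.
  apply: measurable_funD; first exact: measurable_cst.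
  by apply: measurableT_comp => //; apply: measurable_funM.
have intG : \int[P]_x (G x)%:E = 0.
  rewrite (ae_eq_integral (cst 0)) ?integral0//; first exact/measurable_EFinP.
  exists N; split => // x /= Gx; apply: contrapT => Nx; apply: Gx => _.
  by rewrite /G indicE memNset// mul0r.
have pointwise x : (cexp_dist u v (f x) (g x) `^ p
    <= C * (f x - g x) ^+ 2 + (e + G x))%R.
  have := G0 x; have [gx0|gx_lt0] := leP 0%R (g x).
    have := @cexp_dist_powR_le _ u v u_le0 p e _ _ p_ge1 e0 e1 (f_ge0 x) gx0.
    by rewrite -/C; lra.
  have -> : G x = ((1 + expR (u * g x)) `^ p)%R.
    by rewrite /G indicE mem_set ?mul1r.
  have : (cexp_dist u v (f x) (g x) `^ p <= (1 + expR (u * g x)) `^ p)%R.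
    apply: ge0_ler_powR; rewrite ?nnegrE ?sqrtr_ge0 ?addr_ge0 ?expR_ge0//.
      exact: le_trans ler01 p_ge1.
    apply: le_trans (cexp_dist_le_expRD _ _ _ _) _.
    by rewrite lerD2r expR_le1 mulr_le0_ge0.
  have := mulr_ge0 C0 (sqr_ge0 (f x - g x)); lra.
apply: (@le_trans _ _ (\int[P]_x (C%:E * ((f x - g x) ^+ 2)%:E + (e + G x)%:E))).
  apply: ge0_le_integralT => x; first by rewrite lee_fin powR_ge0.
  by rewrite -EFinM -EFinD lee_fin pointwise.
have CJ0 x : 0 <= C%:E * ((f x - g x) ^+ 2)%:E.
  by rewrite -EFinM lee_fin mulr_ge0 ?sqr_ge0.
have eG0 x : (0 <= e + G x)%R by rewrite addr_ge0// ltW.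
have meG : measurable_fun setT (fun x => e + G x)%R.
  exact: measurable_funD (measurable_cst _) mG.
apply: le_trans (ge0_integralD_leT P _ _ CJ0 eG0 meG) _.
apply: leeD; first by apply: ge0_integralZl_leT => // x; rewrite lee_fin sqr_ge0.
under eq_integral do rewrite EFinD.
rewrite ge0_integralD//; last 3 first.
- by move=> x _; rewrite lee_fin ltW.
- by move=> x _; rewrite lee_fin.
- exact/measurable_EFinP.
rewrite intG adde0 integral_cst// -[leRHS]mule1.
by apply: lee_wpmul2l; [rewrite lee_fin ltW | exact: probability_le1].
Qed.

End integral_cexp_dist.

Lemma cvge0_of_le_scaled {R : realType} {I} {F : set_system I} {FF : ProperFilter F}
    (S J : I -> \bar R) :
  (forall i, 0 <= S i)%E -> J @ F --> 0%E ->
  (forall e : R, 0 < e -> e <= 1 ->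
    exists C : R, forall i, (S i <= C%:E * J i + e%:E)%E) ->
  S @ F --> 0%E.
Proof.
move=> S0 J0 S_le.
have S_small e : 0 < e -> e <= 1 -> \forall i \near F, (S i < (2 * e)%:E)%E.
  move=> e0 e1; have [C SCJ] := S_le e e0 e1.
  have CJe : (C%:E * J i + e%:E)%E @[i --> F] --> (0 + e%:E)%E.
    apply: cvgeD => //; last exact: cvg_cst.
    by rewrite -(mule0 C%:E); apply: cvgeZl.
  rewrite add0e in CJe.
  have e_lt2e : (e%:E < (2 * e)%:E)%E by rewrite lte_fin ltr_pMl// ltr1n.
  near=> i; apply: le_lt_trans (SCJ i) _; near: i.
  exact: CJe _ (open_ereal_lt' e_lt2e).
have S_fin : \forall i \near F, S i \is a fin_num.
  apply: filterS (S_small _ ltr01 (lexx 1)) => i Si.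
  by rewrite ge0_fin_numE// (lt_trans Si) ?ltry.
apply/fine_cvgP; split => //; apply/cvgrPdist_lt => e e0.
pose e' := Num.min (e / 2) 1.
have e'0 : 0 < e' by rewrite lt_min divr_gt0// ltr01.
have e'1 : e' <= 1 by rewrite ge_min lexx orbT.
apply: filterS2 S_fin (S_small e' e'0 e'1) => i Sfin Si.
rewrite sub0r normrN ger0_norm ?fine_ge0// -lte_fin fineK//.
apply: lt_le_trans Si _; rewrite lee_fin -ler_pdivlMl// ge_min; apply/orP; left.
by rewrite mulrC.
Unshelve. all: end_near. Qed.

Lemma approx_slt_ge0 {R : realType} {Om : Type} (Tm a b : R) (B : R -> Om -> R)
  eps w : 0 <= approx_slt Tm a b B eps w.
Proof.
rewrite /approx_slt /Rintegral fine_ge0// integral_ge0// => t _.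
rewrite lee_fin fine_ge0// integral_ge0// => s _.
by rewrite lee_fin /heat_kernel mulr_ge0 ?invr_ge0 ?sqrtr_ge0 ?expR_ge0.
Qed.

Theorem corollary3p2 (R : realType) (d : measure_display) (Om : measurableType d)
  (P : probability Om R) (Tm a b : R) (B : R -> Om -> R) (I : Om -> R) :
  0 < Tm ->
  brownian_motion P Tm B ->
  measurable_fun setT I ->
  (* I is the L^2(P)-limit of I_eps as eps -> 0+ *)
  (\int[P]_w ((approx_slt Tm a b B eps w - I w) ^+ 2)%:E)%E @[eps --> 0^'+]
    --> 0%E ->
  forall (u v : R) (p : R), u <= 0 -> 1 <= p ->
  (\int[P]_w ((cexp_dist u v (approx_slt Tm a b B eps w) (I w)) `^ p)%:E)%E
    @[eps --> 0^'+] --> 0%E.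
Proof.
move=> _ _ mI slt_L2 u v p u0 p1.
have slt0 := approx_slt_ge0 Tm a b B.
have I_ge0_ae : P [set w | I w < 0] = 0%E.
  exact: L2_limit_of_ge0_ge0 mI slt0 slt_L2.
apply: cvge0_of_le_scaled slt_L2 _ => [eps|e e0 e1].
  by apply: integral_ge0 => w _; rewrite lee_fin powR_ge0.
exists (2 `^ p * (u ^+ 2 + v ^+ 2) / e ^+ 2) => eps.
exact: (integral_cexp_dist_powR_le P u v p _ I u0 p1 (slt0 eps) mI I_ge0_ae e e0 e1).
Qed.
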